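(* Under the assumptions below, let $y_\varrho\in Y$ be the solution of the continuous problem and $y_{\varrho h}\in Y_h$ the unique solution of the Galerkin problem, with the choice $\varrho=h^{2\alpha}$. Then there is a constant $c>0$ independent of $h$ and $\overline{y}$ such that $$\|y_\varrho-y_{\varrho h}\|_{H_Y}^2+h^{2\alpha}\|y_\varrho-y_{\varrho h}\|_D^2\le c\begin{cases}\|\overline{y}\|_{H_Y}^2&\text{for }\overline{y}\in H_Y,\\ h^{2\alpha}\|\overline{y}\|_D^2&\text{for }\overline{y}\in Y,\\ h^{4\alpha}\|D\overline{y}\|_{H_Y}^2&\text{for }\overline{y}\in Y,\ D\overline{y}\in H_Y.\end{cases}$$
   Context: Abstract setting: Let $Y\subset H_Y\subset Y^*$ be a Gelfand triple of real Hilbert spaces, with duality pairing $\langle\cdot,\cdot\rangle_{Y^*,Y}$ extending the inner product of $H_Y$. Let $D:Y\to Y^*$ be bounded, linear, self-adjoint and elliptic, $\|y\|_D:=\langle Dy,y\rangle_{Y^*,Y}^{1/2}$ (an equivalent norm on $Y$). For $y\in Y$ we write ''$Dy\in H_Y$'' if there is $w\in H_Y$ with $\langle Dy,v\rangle_{Y^*,Y}=\langle w,v\rangle_{H_Y}$ for all $v\in Y$, and then $\|Dy\|_{H_Y}:=\|w\|_{H_Y}$. Given $\overline{y}\in H_Y$ and $\varrho>0$, $y_\varrho\in Y$ is the unique solution of $\langle y_\varrho,y\rangle_{H_Y}+\varrho\langle Dy_\varrho,y\rangle_{Y^*,Y}=\langle\overline{y},y\rangle_{H_Y}$ for all $y\in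 Y$. Discretization: For each discretization parameter $h\in(0,h_0]$ let $Y_h\subset Y$ be a finite-dimensional subspace, and assume there are maps $P_h:Y\to Y_h$, an exponent $\alpha>0$ and constants $c_1,c_2,c_3,c_4>0$ independent of $h$ such that for all $y\in Y$: $\|y-P_hy\|_{H_Y}\le c_1h^\alpha\|y\|_D$ and $\|y-P_hy\|_D\le c_2\|y\|_D$; and, if in addition $Dy\in H_Y$: $\|y-P_hy\|_{H_Y}\le c_3h^{2\alpha}\|Dy\|_{H_Y}$ and $\|y-P_hy\|_D\le c_4h^\alpha\|Dy\|_{H_Y}$. The Galerkin solution $y_{\varrho h}\in Y_h$ satisfies $\langle y_{\varrho h},y_h\rangle_{H_Y}+\varrho\langle Dy_{\varrho h},y_h\rangle_{Y^*,Y}=\langle\overline{y},y_h\rangle_{H_Y}$ for all $y_h\in Y_h$. *)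

From mathcomp Require Import all_boot all_order all_algebra.
From mathcomp Require Import reals exp.
Set Implicit Arguments. Unset Strict Implicit. Unset Printing Implicit Defensive.
Import Order.TTheory GRing.Theory Num.Theory.
Local Open Scope ring_scope.

Section Defs.
Variables (R : realType) (H : lmodType R).

Definition nrm (b : H -> H -> R) (x : H) : R := Num.sqrt (b x x).

Definition subspace (S : H -> Prop) : Prop :=
  S 0 /\ forall (a : R) x y, S x -> S y -> S (a *: x + y).

Definition sym_bilinear_on (S : H -> Prop) (b : H -> H -> R) : Prop :=
  (forall x y, S x -> S y -> b x y = b y x) /\
  (forall (a : R) x y z, S x -> S y -> S z -> b (a *: x + y) z = a * b x z + b y z).

Definition inner_product_on (S : H -> Prop) (b : H -> H -> R) : Prop :=
  sym_bilinear_on S b /\ forall x, S x -> x != 0 -> 0 < b x x.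

Definition complete_in (S : H -> Prop) (n : H -> R) : Prop :=
  forall u : nat -> H, (forall k, S (u k)) ->
    (forall e, 0 < e -> exists N, forall m k, (N <= m)%N -> (N <= k)%N -> n (u m - u k) < e) ->
    exists l, S l /\ forall e, 0 < e -> exists N, forall k, (N <= k)%N -> n (u k - l) < e.

(* Gelfand triple Y ⊂ H_Y ⊂ Y^*: H_Y = (H, ipH) real Hilbert space,
   Y = (Y, ipY) real Hilbert space, continuously and densely embedded in H_Y. *)
Definition gelfand_triple (ipH : H -> H -> R) (Y : H -> Prop) (ipY : H -> H -> R) : Prop :=
  [/\ inner_product_on (fun _ => True) ipH,
      complete_in (fun _ => True) (nrm ipH),
      subspace Y, inner_product_on Y ipY & complete_in Y (nrm ipY)] /\
  (exists C, 0 < C /\ forall y, Y y -> nrm ipH y <= C * nrm ipY y) /\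
  (forall x e, 0 < e -> exists y, Y y /\ nrm ipH (x - y) < e).

(* D : Y -> Y^* bounded, linear, self-adjoint, elliptic, given through
   dD y v = <D y, v>_{Y^*,Y} *)
Definition elliptic_operator (Y : H -> Prop) (ipY : H -> H -> R) (dD : H -> H -> R) : Prop :=
  [/\ sym_bilinear_on Y dD,
      (exists M, 0 < M /\ forall y v, Y y -> Y v -> `|dD y v| <= M * nrm ipY y * nrm ipY v) &
      (exists m, 0 < m /\ forall y, Y y -> m * nrm ipY y ^+ 2 <= dD y y)].

(* "D y ∈ H_Y", with representative w: <D y, v> = (w, v)_{H_Y} for all v in Y;
   then ||D y||_{H_Y} = nrm ipH w *)
Definition DinH (ipH : H -> H -> R) (Y : H -> Prop) (dD : H -> H -> R) (y w : H) : Prop :=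
  forall v, Y v -> dD y v = ipH w v.

Definition fin_dim_subspace (S : H -> Prop) : Prop :=
  exists (n : nat) (b : 'I_n -> H),
    forall x, S x <-> exists c : 'I_n -> R, x = \sum_(i < n) c i *: b i.

(* continuous problem: y_rho in Y solves (y_rho,y)_H + rho <D y_rho, y> = (ybar, y)_H for all y in Y;
   the Galerkin problem is the same with Y replaced by Y_h *)
Definition solves (ipH : H -> H -> R) (S : H -> Prop) (dD : H -> H -> R)
    (rho : R) (ybar yr : H) : Prop :=
  S yr /\ forall v, S v -> ipH yr v + rho * dD yr v = ipH ybar v.

End Defs.

From mathcomp Require Import all_boot all_order all_algebra.
From mathcomp Require Import reals exp.
From mathcomp Require Import lra ring.
Set Implicit Arguments. Unset Strict Implicit. Unset Printing Implicit Defensive.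
Import Order.TTheory GRing.Theory Num.Theory.
Local Open Scope ring_scope.

(* With rho = h^(2 alpha), subtracting the two variational problems gives Galerkin
   orthogonality of the error in the energy product (u, v)_H + rho <D u, v>, hence Cea's
   lemma: the error is no larger in the energy norm than y_rho - v_h for any v_h in Y_h.
   Taking v_h = 0 and the stability bound ||y_rho||^2 + rho ||y_rho||_D^2 <= ||ybar||^2
   gives the first estimate.  For the others take v_h = P_h y_rho: testing the continuous
   problem with y_rho - ybar gives ||y_rho||_D <= ||ybar||_D, and D y_rho is represented
   in H_Y by (ybar - y_rho) / rho, whose norm is at most ||D ybar||_H; the approximation
   properties of P_h then produce exactly the powers of h that rho compensates. *)

Section BilinearForm.
Variables (R : realType) (H : lmodType R) (S : H -> Prop) (b : H -> H -> R).
Hypotheses (S_sub : subspace S) (b_bilin : sym_bilinear_on S b).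

Lemma subspace0 : S 0. Proof. by case: S_sub. Qed.

Lemma subspaceZ a x : S x -> S (a *: x).
Proof. by move=> Sx; rewrite -[_ *: _]addr0; case: S_sub => S0; apply. Qed.

Lemma subspaceD x y : S x -> S y -> S (x + y).
Proof. by move=> Sx Sy; rewrite -[x]scale1r; case: S_sub => _; apply. Qed.

Lemma subspaceB x y : S x -> S y -> S (x - y).
Proof. by move=> Sx Sy; rewrite -scaleN1r; apply/subspaceD/subspaceZ. Qed.

Lemma bilinC x y : S x -> S y -> b x y = b y x.
Proof. by case: b_bilin => bC _; apply: bC. Qed.

Lemma bilinDl x y z : S x -> S y -> S z -> b (x + y) z = b x z + b y z.
Proof. by case: b_bilin => _ bL Sx Sy Sz; rewrite -[x in LHS]scale1r bL // mul1r. Qed.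

Lemma bilin0l z : S z -> b 0 z = 0.
Proof.
move=> Sz; have := bilinDl subspace0 subspace0 Sz; rewrite addr0; lra.
Qed.

Lemma bilinZl a x z : S x -> S z -> b (a *: x) z = a * b x z.
Proof.
case: b_bilin => _ bL Sx Sz.
by rewrite -[_ *: _]addr0 (bL a x 0 z) ?bilin0l ?addr0 //; apply: subspace0.
Qed.

Lemma bilinBl x y z : S x -> S y -> S z -> b (x - y) z = b x z - b y z.
Proof.
move=> Sx Sy Sz; rewrite -scaleN1r bilinDl ?bilinZl ?mulN1r //; exact: subspaceZ.
Qed.

Lemma bilinZr a x z : S x -> S z -> b z (a *: x) = a * b z x.
Proof. by move=> Sx Sz; rewrite bilinC ?bilinZl 1?bilinC //; apply: subspaceZ. Qed.

Lemma bilinBr x y z : S x -> S y -> S z -> b z (x - y) = b z x - b z y.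
Proof.
move=> Sx Sy Sz; rewrite bilinC ?bilinBl ?(bilinC _ Sz) //; exact: subspaceB.
Qed.

Lemma bilinDD x y : S x -> S y -> b (x + y) (x + y) = b x x + 2 * b x y + b y y.
Proof.
move=> Sx Sy; have Sxy := subspaceD Sx Sy.
by rewrite !bilinDl // !(bilinC _ Sxy) // !bilinDl // (bilinC Sy Sx); ring.
Qed.

Lemma bilinBB x y : S x -> S y -> b (x - y) (x - y) = b x x - 2 * b x y + b y y.
Proof.
move=> Sx Sy; have Sxy := subspaceB Sx Sy.
by rewrite !bilinBl // !(bilinC _ Sxy) // !bilinBl // (bilinC Sy Sx); ring.
Qed.

End BilinearForm.

Lemma subspaceT (R : realType) (H : lmodType R) : subspace (fun _ : H => True).
Proof. by []. Qed.

Lemma fin_dim_subspaceP (R : realType) (H : lmodType R) (S : H -> Prop) :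
  fin_dim_subspace S -> subspace S.
Proof.
move=> [n [e Se]]; split.
  by apply/Se; exists (fun=> 0); rewrite big1 // => i _; rewrite scale0r.
move=> a _ _ /Se [cx ->] /Se [cy ->]; apply/Se; exists (fun i => a * cx i + cy i).
by rewrite scaler_sumr -big_split; apply: eq_bigr => i _; rewrite scalerDl scalerA.
Qed.

Lemma inner_product_ge0 (R : realType) (H : lmodType R) (S : H -> Prop) b x :
  subspace S -> inner_product_on S b -> S x -> 0 <= b x x.
Proof.
move=> S_sub [b_bilin b_pos] Sx; have [->|x_neq0] := eqVneq x 0.
  by rewrite (bilin0l S_sub b_bilin) //; apply: subspace0.
exact/ltW/b_pos.
Qed.

Lemma elliptic_ge0 (R : realType) (H : lmodType R) (Y : H -> Prop) ipY dD y :
  elliptic_operator Y ipY dD -> Y y -> 0 <= dD y y.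
Proof.
move=> [_ _ [m [m_gt0 dD_ell]]] Yy; apply: le_trans (dD_ell y Yy).
by rewrite mulr_ge0 ?sqr_ge0 ?ltW.
Qed.

Lemma powR_mul2l (R : realType) (a x : R) : a `^ (2 * x) = a `^ x ^+ 2.
Proof. by rewrite mulrC powRrM powR_mulrn ?powR_ge0. Qed.

Lemma sqr_nrm (R : realType) (H : lmodType R) (b : H -> H -> R) x :
  0 <= b x x -> nrm b x ^+ 2 = b x x.
Proof. exact: sqr_sqrtr. Qed.

Lemma sqr_nrm_le (R : realType) (H : lmodType R) (b b' : H -> H -> R) x y K :
  0 <= b' y y -> nrm b x <= K * nrm b' y -> b x x <= K ^+ 2 * b' y y.
Proof.
move=> by_ge0 le_nrm; have [bx_lt0|bx_ge0] := ltP (b x x) 0.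
  by apply: le_trans (ltW bx_lt0) _; rewrite mulr_ge0 ?sqr_ge0.
rewrite -(sqr_nrm bx_ge0) -(sqr_nrm by_ge0) -exprMn lerXn2r ?nnegrE ?sqrtr_ge0 //.
exact: le_trans (sqrtr_ge0 _) le_nrm.
Qed.

Section GalerkinError.
Variables (R : realType) (H : lmodType R) (ipH : H -> H -> R) (Y Yh : H -> Prop).
Variables (dD : H -> H -> R) (rho : R).
Hypotheses (ipH_bilin : sym_bilinear_on (fun _ => True) ipH)
  (ipH_ge0 : forall x, 0 <= ipH x x).
Hypotheses (Y_sub : subspace Y) (dD_bilin : sym_bilinear_on Y dD)
  (dD_ge0 : forall y, Y y -> 0 <= dD y y).
Hypotheses (Yh_sub : subspace Yh) (Yh_Y : forall x, Yh x -> Y x) (rho_gt0 : 0 < rho).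
Variables (ybar yr yrh : H).
Hypotheses (yr_sol : solves ipH Y dD rho ybar yr) (yrh_sol : solves ipH Yh dD rho ybar yrh).

Definition energy (v : H) : R := ipH v v + rho * dD v v.

Let ipT := subspaceT H.
Let Y_yr : Y yr. Proof. by case: yr_sol. Qed.
Let Y_yrh : Y yrh. Proof. by case: yrh_sol => /Yh_Y. Qed.
Let Y_err : Y (yr - yrh). Proof. exact: subspaceB Y_yr Y_yrh. Qed.

Lemma galerkin_orthogonality v :
  Yh v -> ipH (yr - yrh) v + rho * dD (yr - yrh) v = 0.
Proof.
move=> Yh_v; have Y_v := Yh_Y Yh_v.
rewrite (bilinBl ipT ipH_bilin) // (bilinBl Y_sub dD_bilin) //.
case: yr_sol => _ /(_ v Y_v); case: yrh_sol => _ /(_ v Yh_v); lra.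
Qed.

Lemma energy_galerkin_le vh : Yh vh -> energy (yr - yrh) <= energy (yr - vh).
Proof.
move=> Yh_vh; have Yh_d : Yh (yrh - vh) by apply: subspaceB => //; case: yrh_sol.
have Y_d := Yh_Y Yh_d.
have -> : yr - vh = (yr - yrh) + (yrh - vh) by rewrite addrA subrK.
rewrite /energy (bilinDD ipT ipH_bilin (x := yr - yrh)) //.
rewrite (bilinDD Y_sub dD_bilin Y_err Y_d).
have := galerkin_orthogonality Yh_d; have := ipH_ge0 (yrh - vh).
have := mulr_ge0 (ltW rho_gt0) (dD_ge0 Y_d); rewrite !mulrDr; lra.
Qed.

Lemma energy_solution_le : energy yr <= ipH ybar ybar.
Proof.
have := ipH_ge0 (ybar - yr); rewrite (bilinBB ipT ipH_bilin) //.
have := mulr_ge0 (ltW rho_gt0) (dD_ge0 Y_yr).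
case: yr_sol => _ /(_ yr Y_yr); rewrite /energy; lra.
Qed.

Lemma galerkin_error_le_H : energy (yr - yrh) <= ipH ybar ybar.
Proof.
have := energy_galerkin_le (subspace0 Yh_sub); rewrite subr0 => /le_trans; apply.
exact: energy_solution_le.
Qed.

Lemma solution_dD_le : Y ybar -> dD yr yr <= dD ybar ybar.
Proof.
move=> Y_ybar; have Y_z : Y (yr - ybar) by apply: subspaceB.
have orth : ipH (yr - ybar) (yr - ybar) + rho * dD yr (yr - ybar) = 0.
  by case: yr_sol => _ /(_ _ Y_z); rewrite (bilinBl ipT ipH_bilin) //; lra.
have : dD yr (yr - ybar) <= 0.
  by rewrite -(pmulr_rle0 _ rho_gt0); have := ipH_ge0 (yr - ybar); lra.
have := dD_ge0 Y_z; rewrite (bilinBB Y_sub dD_bilin) // (bilinBr Y_sub dD_bilin) //.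
lra.
Qed.

Lemma solution_DinH : DinH ipH Y dD yr (rho^-1 *: (ybar - yr)).
Proof.
move=> v Y_v; rewrite (bilinZl ipT ipH_bilin) // (bilinBl ipT ipH_bilin) //.
case: yr_sol => _ /(_ v Y_v) sol_v.
have -> : ipH ybar v - ipH yr v = rho * dD yr v by lra.
by rewrite mulrA mulVf ?gt_eqF // mul1r.
Qed.

Lemma solution_residual_le w :
  Y ybar -> DinH ipH Y dD ybar w -> ipH (ybar - yr) (ybar - yr) <= rho ^+ 2 * ipH w w.
Proof.
move=> Y_ybar Dw; set z := ybar - yr; have Y_z : Y z by apply: subspaceB.
have orth : rho * dD yr z = ipH z z.
  by case: yr_sol => _ /(_ z Y_z); rewrite /z (bilinBl ipT ipH_bilin) //; lra.
have dD_yr_z : dD yr z = ipH w z - dD z z.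
  have -> : yr = ybar - z by rewrite /z opprB addrC subrK.
  by rewrite (bilinBl Y_sub dD_bilin) // Dw.
have zz_le : ipH z z <= rho * ipH w z.
  by have := mulr_ge0 (ltW rho_gt0) (dD_ge0 Y_z); move: orth; rewrite dD_yr_z; lra.
(* 0 <= |rho w - z|^2 = rho^2 (w, w) - 2 rho (w, z) + (z, z) with (z, z) <= rho (w, z) *)
have := ipH_ge0 (rho *: w - z); rewrite (bilinBB ipT ipH_bilin) //.
rewrite (bilinZl ipT ipH_bilin) // (bilinZr ipT ipH_bilin) // (bilinZl ipT ipH_bilin) //.
rewrite expr2; lra.
Qed.

Lemma solution_DinH_le w :
  Y ybar -> DinH ipH Y dD ybar w ->
  ipH (rho^-1 *: (ybar - yr)) (rho^-1 *: (ybar - yr)) <= ipH w w.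
Proof.
move=> Y_ybar Dw; rewrite (bilinZl ipT ipH_bilin) // (bilinZr ipT ipH_bilin) // mulrA.
rewrite -(ler_pM2l (exprn_gt0 2 rho_gt0)) mulrA -expr2 -exprMn mulrV ?unitfE ?gt_eqF //.
by rewrite expr1n mul1r; apply: solution_residual_le.
Qed.

Variables (P : H -> H) (a1 a2 a3 a4 : R).
Hypotheses (a1_ge0 : 0 <= a1) (a2_ge0 : 0 <= a2) (a3_ge0 : 0 <= a3) (a4_ge0 : 0 <= a4).
Hypothesis P_in : forall y, Y y -> Yh (P y).
Hypothesis P_approx : forall y, Y y ->
  ipH (y - P y) (y - P y) <= a1 * rho * dD y y /\ dD (y - P y) (y - P y) <= a2 * dD y y.
Hypothesis P_approx_DinH : forall y w, Y y -> DinH ipH Y dD y w ->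
  ipH (y - P y) (y - P y) <= a3 * rho ^+ 2 * ipH w w /\
  dD (y - P y) (y - P y) <= a4 * rho * ipH w w.

Lemma galerkin_error_le_D : Y ybar -> energy (yr - yrh) <= (a1 + a2) * rho * dD ybar ybar.
Proof.
move=> Y_ybar; apply: le_trans (energy_galerkin_le (P_in Y_yr)) _.
have [ipH_le dD_le] := P_approx Y_yr.
have := ler_wpM2l (ltW rho_gt0) dD_le.
have := ler_wpM2l (mulr_ge0 (addr_ge0 a1_ge0 a2_ge0) (ltW rho_gt0)) (solution_dD_le Y_ybar).
rewrite /energy; lra.
Qed.

Lemma galerkin_error_le_DH w :
  Y ybar -> DinH ipH Y dD ybar w -> energy (yr - yrh) <= (a3 + a4) * rho ^+ 2 * ipH w w.
Proof.
move=> Y_ybar Dw; apply: le_trans (energy_galerkin_le (P_in Y_yr)) _.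
have [ipH_le dD_le] := P_approx_DinH Y_yr solution_DinH.
have := ler_wpM2l (ltW rho_gt0) dD_le.
have := ler_wpM2l (mulr_ge0 (addr_ge0 a3_ge0 a4_ge0) (exprn_ge0 2 (ltW rho_gt0)))
  (solution_DinH_le Y_ybar Dw).
rewrite /energy expr2; lra.
Qed.

End GalerkinError.

Theorem mainTheorem3 (R : realType) (H : lmodType R) (ipH : H -> H -> R)
    (Y : H -> Prop) (ipY : H -> H -> R) (dD : H -> H -> R)
    (h0 alpha c1 c2 c3 c4 : R) (Yh : R -> H -> Prop) (P : R -> H -> H) :
  gelfand_triple ipH Y ipY ->
  elliptic_operator Y ipY dD ->
  0 < h0 -> 0 < alpha -> 0 < c1 -> 0 < c2 -> 0 < c3 -> 0 < c4 ->
  (forall h, 0 < h <= h0 -> fin_dim_subspace (Yh h) /\ (forall x, Yh h x -> Y x)) ->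
  (forall h, 0 < h <= h0 -> forall y, Y y ->
     [/\ Yh h (P h y),
         nrm ipH (y - P h y) <= c1 * h `^ alpha * nrm dD y &
         nrm dD (y - P h y) <= c2 * nrm dD y]) ->
  (forall h, 0 < h <= h0 -> forall y w, Y y -> DinH ipH Y dD y w ->
     nrm ipH (y - P h y) <= c3 * h `^ (2 * alpha) * nrm ipH w /\
     nrm dD (y - P h y) <= c4 * h `^ alpha * nrm ipH w) ->
  exists c : R, 0 < c /\
    forall (h : R) (ybar yr yrh : H), 0 < h <= h0 ->
      solves ipH Y dD (h `^ (2 * alpha)) ybar yr ->
      solves ipH (Yh h) dD (h `^ (2 * alpha)) ybar yrh ->
      [/\ nrm ipH (yr - yrh) ^+ 2 + h `^ (2 * alpha) * nrm dD (yr - yrh) ^+ 2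
            <= c * nrm ipH ybar ^+ 2,
          Y ybar ->
          nrm ipH (yr - yrh) ^+ 2 + h `^ (2 * alpha) * nrm dD (yr - yrh) ^+ 2
            <= c * h `^ (2 * alpha) * nrm dD ybar ^+ 2 &
          forall w, Y ybar -> DinH ipH Y dD ybar w ->
          nrm ipH (yr - yrh) ^+ 2 + h `^ (2 * alpha) * nrm dD (yr - yrh) ^+ 2
            <= c * h `^ (4 * alpha) * nrm ipH w ^+ 2].
Proof.
move=> [[ipH_ip _ Y_sub _ _] _] D_ell _ _ _ _ _ _ hYh hP hPD.
have [ipH_bilin _] := ipH_ip; have [dD_bilin _ _] := D_ell.
have ipH_ge0 x : 0 <= ipH x x by apply: inner_product_ge0 (subspaceT H) ipH_ip _.
have dD_ge0 y : Y y -> 0 <= dD y y by apply: elliptic_ge0 D_ell.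
have [c12_ge0 c34_ge0] : 0 <= c1 ^+ 2 + c2 ^+ 2 /\ 0 <= c3 ^+ 2 + c4 ^+ 2.
  by rewrite !addr_ge0 ?sqr_ge0.
set C := 1 + (c1 ^+ 2 + c2 ^+ 2) + (c3 ^+ 2 + c4 ^+ 2).
exists C; split=> [|h ybar yr yrh /[dup] hh /andP[h_gt0 _] yr_sol yrh_sol].
  by rewrite /C; lra.
have [/fin_dim_subspaceP Yh_sub Yh_Y] := hYh h hh.
set rho := h `^ (2 * alpha).
have rho_gt0 : 0 < rho by apply: powR_gt0.
have rhoE : h `^ alpha ^+ 2 = rho by rewrite /rho powR_mul2l.
have rho2E : h `^ (4 * alpha) = rho ^+ 2.
  by rewrite /rho -powR_mul2l; congr (_ `^ _); ring.
have P_in y : Y y -> Yh h (P h y) by case/(hP h hh).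
have Y_approx_err y : Y y -> Y (y - P h y).
  by move=> Yy; exact: (subspaceB Y_sub Yy (Yh_Y _ (P_in _ Yy))).
have P_approx y : Y y -> ipH (y - P h y) (y - P h y) <= c1 ^+ 2 * rho * dD y y /\
    dD (y - P h y) (y - P h y) <= c2 ^+ 2 * dD y y.
  move=> Yy; have [_ ipH_le dD_le] := hP h hh y Yy; rewrite -rhoE -exprMn.
  by split; apply: sqr_nrm_le; rewrite ?dD_ge0 ?Y_approx_err.
have P_approx_DinH y w : Y y -> DinH ipH Y dD y w ->
    ipH (y - P h y) (y - P h y) <= c3 ^+ 2 * rho ^+ 2 * ipH w w /\
    dD (y - P h y) (y - P h y) <= c4 ^+ 2 * rho * ipH w w.
  move=> Yy Dw; have [ipH_le dD_le] := hPD h hh y w Yy Dw.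
  by split; [rewrite -exprMn | rewrite -rhoE -exprMn]; apply: sqr_nrm_le.
have Y_err : Y (yr - yrh).
  by apply: (subspaceB Y_sub); [case: yr_sol | case: yrh_sol => /Yh_Y].
rewrite rho2E !(sqr_nrm (ipH_ge0 _)) (sqr_nrm (dD_ge0 _ Y_err)).
split=> [|Y_ybar|w Y_ybar Dw].
- apply: le_trans (galerkin_error_le_H ipH_bilin ipH_ge0 Y_sub dD_bilin dD_ge0
    Yh_sub Yh_Y rho_gt0 yr_sol yrh_sol) _.
  by rewrite ler_peMl ?ipH_ge0 // /C; lra.
- rewrite sqr_nrm ?dD_ge0 //; apply: le_trans (galerkin_error_le_D ipH_bilin ipH_ge0 Y_sub
    dD_bilin dD_ge0 Yh_sub Yh_Y rho_gt0 yr_sol yrh_sol (sqr_ge0 c1) (sqr_ge0 c2)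
    P_in P_approx Y_ybar) _.
  rewrite -!mulrA; apply: ler_wpM2r; first by rewrite mulr_ge0 ?dD_ge0 ?ltW.
  by rewrite /C; lra.
- rewrite sqr_nrm //; apply: le_trans (galerkin_error_le_DH ipH_bilin ipH_ge0 Y_sub
    dD_bilin dD_ge0 Yh_sub Yh_Y rho_gt0 yr_sol yrh_sol (sqr_ge0 c3) (sqr_ge0 c4)
    P_in P_approx_DinH Y_ybar Dw) _.
  rewrite -!mulrA; apply: ler_wpM2r; first by rewrite !mulr_ge0 ?ipH_ge0 ?ltW.
  by rewrite /C; lra.
Qed.
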